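(* Let $d\ge 2$ be an integer and $\mathcal{T}=[t_{i_1,\ldots,i_d}]\in\mathrm{Sym}(2,d)\setminus\{0\}$. Assume that $\mathcal{T}$ has a best rank one approximation which is not symmetric. Then for each $i_3,\ldots,i_d\in\{1,2\}$ the $2\times 2$ symmetric matrix $[t_{i,j,i_3,\ldots,i_d}]_{i,j=1}^2$ has trace zero.
   Context: $\mathrm{Sym}(2,d)$ is the space of real tensors $[t_{i_1,\ldots,i_d}]_{i_1,\ldots,i_d=1}^2$ invariant under all permutations of indices. Norm $\|\mathcal{T}\|=\sqrt{\sum t_{i_1,\ldots,i_d}^2}$; $\mathrm{S}^1$ is the unit circle in $\mathbb{R}^2$. A best rank one approximation of $\mathcal{T}$ is a tensor $a\,\mathbf{x}_1\otimes\cdots\otimes\mathbf{x}_d$ ($a\in\mathbb{R}$, $\mathbf{x}_j\in\mathrm{S}^1$) minimizing $\|\mathcal{T}-s\,\mathbf{y}_1\otimes\cdots\otimes\mathbf{y}_d\|$ over $s\in\mathbb{R}$, $\mathbf{y}_j\in\mathrm{S}^1$; it is symmetric if it is a symmetric tensor. *)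

From mathcomp Require Import all_boot all_order all_algebra all_fingroup.
From mathcomp Require Import reals.
Set Implicit Arguments. Unset Strict Implicit. Unset Printing Implicit Defensive.
Import Order.TTheory GRing.Theory Num.Theory.
Local Open Scope ring_scope.

(* Multi-indices (i_1,...,i_d) with i_k in {1,2} (encoded as 'I_2 = {0,1}). *)
Definition mindex (d : nat) := {ffun 'I_d -> 'I_2}.

Definition tensor (R : realType) (d : nat) := mindex d -> R.

Definition tnorm (R : realType) (d : nat) (T : tensor R d) : R :=
  Num.sqrt (\sum_(i : mindex d) T i ^+ 2).

Definition sym_tensor (R : realType) (d : nat) (T : tensor R d) : Prop :=
  forall (s : 'S_d) (i : mindex d), T [ffun k => i (s k)] = T i.

Definition on_S1 (R : realType) (x : 'I_2 -> R) : Prop :=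
  \sum_(j < 2) x j ^+ 2 = 1.

Definition rank1 (R : realType) (d : nat) (a : R) (xs : 'I_d -> 'I_2 -> R)
  : tensor R d :=
  fun i => a * \prod_(k < d) xs k (i k).

Definition tsub (R : realType) (d : nat) (T U : tensor R d) : tensor R d :=
  fun i => T i - U i.

Definition best_rank1 (R : realType) (d : nat) (T : tensor R d)
  (a : R) (xs : 'I_d -> 'I_2 -> R) : Prop :=
  (forall k, on_S1 (xs k)) /\
  forall (s : R) (ys : 'I_d -> 'I_2 -> R), (forall k, on_S1 (ys k)) ->
    tnorm (tsub T (rank1 a xs)) <= tnorm (tsub T (rank1 s ys)).

(* The multi-index (i, j, i_3, ..., i_d): overwrite the first two slots of idx. *)
Definition idx2 (d : nat) (idx : mindex d) (i j : 'I_2) : mindex d :=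
  [ffun k : 'I_d => if val k == 0%N then i else if val k == 1%N then j else idx k].

From mathcomp Require Import all_boot all_order all_algebra all_fingroup.
From mathcomp Require Import reals.
From mathcomp Require Import lra ring.
Import Order.TTheory GRing.Theory Num.Theory.
Set Implicit Arguments. Unset Strict Implicit. Unset Printing Implicit Defensive.
Local Open Scope ring_scope.

(* A best rank one approximation a x_1 (x) ... (x) x_d of T maximizes the multilinear form
   T(y_1, ..., y_d) over unit vectors, with maximum sg = |a|.  Non-symmetry forces a <> 0 and
   two independent vectors x_p, x_l.  Freezing all slots but two turns T into a symmetric
   bilinear form on R^2 whose maximum sg is attained at an independent pair, so its matrix is
   sg times a reflection: traceless with eigenvalues +-sg.  By the symmetry of T this property
   survives replacing any other slot by an arbitrary unit vector: for a generic one a new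
   independent maximizing pair is exhibited, and the remaining two directions are recovered
   from polynomial identities on the circle.  Filling all other slots with basis vectors then
   gives the trace-zero slices of T. *)

Section UnitCircle.
Variable R : realFieldType.

Lemma unit_maximizer_collinear (s ux uy wx wy : R) :
  0 < s -> ux ^+ 2 + uy ^+ 2 = 1 -> ux * wx + uy * wy = s ->
  (forall px py : R, px ^+ 2 + py ^+ 2 = 1 -> px * wx + py * wy <= s) ->
  wx = s * ux /\ wy = s * uy.
Proof.
move=> s_gt0 u_unit uw_s u_max.
set t := - uy * wx + ux * wy.
have t0 : t = 0.
  (* otherwise the rotation of u with Cayley parameter l = t / 2s beats s *)
  set l := t / (2 * s).
  have tE : t = 2 * s * l by rewrite /l; field; lra.
  have D_gt0 : 0 < 1 + l ^+ 2 by nra.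
  have D_neq0 : 1 + l ^+ 2 != 0 by rewrite gt_eqF.
  set px := ((1 - l ^+ 2) * ux - 2 * l * uy) / (1 + l ^+ 2).
  set py := ((1 - l ^+ 2) * uy + 2 * l * ux) / (1 + l ^+ 2).
  have p_unit : px ^+ 2 + py ^+ 2 = 1.
    have -> : px ^+ 2 + py ^+ 2 = (1 + l ^+ 2) ^+ 2 * (ux ^+ 2 + uy ^+ 2) / (1 + l ^+ 2) ^+ 2.
      by rewrite /px /py; field.
    by rewrite u_unit mulr1 divff // expf_neq0.
  have := u_max _ _ p_unit.
  have -> : px * wx + py * wy = ((1 - l ^+ 2) * (ux * wx + uy * wy) + 2 * l * t) / (1 + l ^+ 2).
    by rewrite /px /py /t; field.
  rewrite uw_s ler_pdivrMr // => h; nra.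
have wxE : wx * (ux ^+ 2 + uy ^+ 2) = ux * (ux * wx + uy * wy) - uy * t by rewrite /t; ring.
have wyE : wy * (ux ^+ 2 + uy ^+ 2) = uy * (ux * wx + uy * wy) + ux * t by rewrite /t; ring.
rewrite u_unit uw_s t0 mulr1 in wxE; rewrite u_unit uw_s t0 mulr1 in wyE.
by rewrite wxE wyE; split; ring.
Qed.

(* Maximality in each slot gives A v = s u and A u = s v for A = [[a, b], [b, c]],
   so u + v and u - v are independent eigenvectors for s and -s. *)
Lemma sym_bilinear_max_indep (a b c s ux uy vx vy : R) :
  0 < s -> ux ^+ 2 + uy ^+ 2 = 1 -> vx ^+ 2 + vy ^+ 2 = 1 ->
  (forall px py qx qy : R, px ^+ 2 + py ^+ 2 = 1 -> qx ^+ 2 + qy ^+ 2 = 1 ->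
     px * qx * a + px * qy * b + py * qx * b + py * qy * c <= s) ->
  ux * vx * a + ux * vy * b + uy * vx * b + uy * vy * c = s ->
  ux * vy - uy * vx != 0 ->
  a + c = 0 /\ a ^+ 2 + b ^+ 2 = s ^+ 2.
Proof.
move=> s_gt0 u_unit v_unit Amax uAv det_neq0.
have [E1 E2] : a * vx + b * vy = s * ux /\ b * vx + c * vy = s * uy.
  apply: unit_maximizer_collinear => //; first by rewrite -uAv; ring.
  move=> px py p_unit; have := Amax px py vx vy p_unit v_unit.
  by congr (_ <= _); ring.
have [E3 E4] : a * ux + b * uy = s * vx /\ b * ux + c * uy = s * vy.
  apply: unit_maximizer_collinear => //; first by rewrite -uAv; ring.
  move=> px py p_unit; have := Amax px py ux uy p_unit u_unit.
  by congr (_ <= _); ring.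
set p1 := ux + vx; set p2 := uy + vy; set q1 := ux - vx; set q2 := uy - vy.
have e1 : a * p1 + b * p2 - s * p1 = 0 by rewrite /p1 /p2; lra.
have e2 : b * p1 + c * p2 - s * p2 = 0 by rewrite /p1 /p2; lra.
have e3 : a * q1 + b * q2 + s * q1 = 0 by rewrite /q1 /q2; lra.
have e4 : b * q1 + c * q2 + s * q2 = 0 by rewrite /q1 /q2; lra.
have pq_indep : p1 * q2 - p2 * q1 != 0.
  have -> : p1 * q2 - p2 * q1 = -2 * (ux * vy - uy * vx) by rewrite /p1 /p2 /q1 /q2; ring.
  by rewrite mulf_neq0 // oppr_eq0 pnatr_eq0.
have trace0 : a + c = 0.
  have : (a + c) * (p1 * q2 - p2 * q1) =
    q2 * (a * p1 + b * p2 - s * p1) + p1 * (b * q1 + c * q2 + s * q2)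
    - p2 * (a * q1 + b * q2 + s * q1) - q1 * (b * p1 + c * p2 - s * p2) by ring.
  rewrite e1 e2 e3 e4 !mulr0 !subr0 addr0 => /eqP.
  by rewrite mulf_eq0 (negbTE pq_indep) orbF => /eqP.
split=> //.
have cE : c = - a by lra.
have K1 : (s ^+ 2 - a ^+ 2 - b ^+ 2) * p1 = 0.
  have -> : (s ^+ 2 - a ^+ 2 - b ^+ 2) * p1 =
    - (a + s) * (a * p1 + b * p2 - s * p1) - b * (b * p1 + c * p2 - s * p2) by rewrite cE; ring.
  by rewrite e1 e2; ring.
have K2 : (s ^+ 2 - a ^+ 2 - b ^+ 2) * p2 = 0.
  have -> : (s ^+ 2 - a ^+ 2 - b ^+ 2) * p2 =
    - b * (a * p1 + b * p2 - s * p1) + (a - s) * (b * p1 + c * p2 - s * p2) by rewrite cE; ring.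
  by rewrite e1 e2; ring.
move/eqP: K1; rewrite mulf_eq0 => /orP [/eqP ?|/eqP p1_0]; first by lra.
move/eqP: K2; rewrite mulf_eq0 => /orP [/eqP ?|/eqP p2_0]; first by lra.
by move: pq_indep; rewrite p1_0 p2_0 !mul0r subrr eqxx.
Qed.

(* Rotating y by the angles with (cos, sin) = (4/5, +-3/5), (3/5, 4/5) leaves the line
   g . y = 0, and three such values determine a linear and a quadratic form of the angle. *)
Lemma circle_identity_off_line (g0 g1 l0 l1 m0 m1 n0 n1 s : R) :
  g0 ^+ 2 + g1 ^+ 2 != 0 ->
  (forall y0 y1 : R, y0 ^+ 2 + y1 ^+ 2 = 1 -> g0 * y0 + g1 * y1 != 0 ->
     l0 * y0 + l1 * y1 = 0 /\ (m0 * y0 + m1 * y1) ^+ 2 + (n0 * y0 + n1 * y1) ^+ 2 = s ^+ 2) ->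
  forall y0 y1 : R, y0 ^+ 2 + y1 ^+ 2 = 1 ->
    l0 * y0 + l1 * y1 = 0 /\ (m0 * y0 + m1 * y1) ^+ 2 + (n0 * y0 + n1 * y1) ^+ 2 = s ^+ 2.
Proof.
move=> g_neq0 Hgen y0 y1 y_unit.
have [gy0|] := eqVneq (g0 * y0 + g1 * y1) 0; last exact: Hgen.
have gy'_neq0 : g0 * - y1 + g1 * y0 != 0.
  apply: contraNneq g_neq0 => gy'0.
  have -> : g0 ^+ 2 + g1 ^+ 2 =
      (g0 * y0 + g1 * y1) ^+ 2 + (g0 * - y1 + g1 * y0) ^+ 2 by rewrite -[LHS]mulr1 -y_unit; ring.
  by apply/eqP; rewrite gy0 gy'0; ring.
have rot c e : c ^+ 2 + e ^+ 2 = 1 -> e != 0 ->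
   l0 * (c * y0 - e * y1) + l1 * (c * y1 + e * y0) = 0 /\
   (m0 * (c * y0 - e * y1) + m1 * (c * y1 + e * y0)) ^+ 2 +
   (n0 * (c * y0 - e * y1) + n1 * (c * y1 + e * y0)) ^+ 2 = s ^+ 2.
  move=> ce_unit e_neq0; apply: Hgen.
    have -> : (c * y0 - e * y1) ^+ 2 + (c * y1 + e * y0) ^+ 2 =
        (c ^+ 2 + e ^+ 2) * (y0 ^+ 2 + y1 ^+ 2) by ring.
    by rewrite ce_unit y_unit mulr1.
  have -> : g0 * (c * y0 - e * y1) + g1 * (c * y1 + e * y0) =
      c * (g0 * y0 + g1 * y1) + e * (g0 * - y1 + g1 * y0) by ring.
  by rewrite gy0 mulr0 add0r mulf_neq0.
have [L1 Q1] := rot (4 / 5) (3 / 5) ltac:(lra) ltac:(apply/eqP; lra).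
have [L2 Q2] := rot (4 / 5) (- 3 / 5) ltac:(lra) ltac:(apply/eqP; lra).
have [L3 Q3] := rot (3 / 5) (4 / 5) ltac:(lra) ltac:(apply/eqP; lra).
set A := m0 * y0 + m1 * y1; set B := n0 * y0 + n1 * y1.
set A' := m0 * - y1 + m1 * y0; set B' := n0 * - y1 + n1 * y0.
have QE c e : (m0 * (c * y0 - e * y1) + m1 * (c * y1 + e * y0)) ^+ 2 +
    (n0 * (c * y0 - e * y1) + n1 * (c * y1 + e * y0)) ^+ 2 =
    c ^+ 2 * (A ^+ 2 + B ^+ 2) + 2 * c * e * (A * A' + B * B') + e ^+ 2 * (A' ^+ 2 + B' ^+ 2).
  by rewrite /A /B /A' /B'; ring.
have LE c e : l0 * (c * y0 - e * y1) + l1 * (c * y1 + e * y0) =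
    c * (l0 * y0 + l1 * y1) + e * (l0 * - y1 + l1 * y0) by ring.
rewrite !QE in Q1 Q2 Q3; rewrite !LE in L1 L2.
set X := A ^+ 2 + B ^+ 2 in Q1 Q2 Q3 *; set Z := A * A' + B * B' in Q1 Q2 Q3.
set W := A' ^+ 2 + B' ^+ 2 in Q1 Q2 Q3.
split; lra.
Qed.

End UnitCircle.

Section Contraction.
Variables (R : realType) (d : nat) (T : tensor R d).
Implicit Types (ys z : 'I_d -> 'I_2 -> R) (u v y : 'I_2 -> R) (k m p q : 'I_d).

Definition tcontract ys : R := \sum_(j : mindex d) T j * \prod_(k < d) ys k (j k).

Definition setv ys m v : 'I_d -> 'I_2 -> R := fun k => if k == m then v else ys k.

Definition basis2 (c : 'I_2) : 'I_2 -> R := fun c' => (c' == c)%:R.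

Lemma ord2P (c : 'I_2) : c = ord0 \/ c = ord_max.
Proof. by case: c => [[|[|n]]] lt_c2; [left; exact: val_inj|right; exact: val_inj|]. Qed.

Lemma tcontract_ext {ys ys'} : (forall k c, ys k c = ys' k c) -> tcontract ys = tcontract ys'.
Proof. by move=> E; apply: eq_bigr => j _; congr (_ * _); apply: eq_bigr => k _. Qed.

Lemma tcontract_setv ys m v : tcontract (setv ys m v) =
  v ord0 * tcontract (setv ys m (basis2 ord0)) + v ord_max * tcontract (setv ys m (basis2 ord_max)).
Proof.
rewrite /tcontract !mulr_sumr -big_split; apply: eq_bigr => j _ /=.
rewrite (bigD1 m) //= [X in _ = _ * (_ * X) + _](bigD1 m) //=
   [X in _ = _ + _ * (_ * X)](bigD1 m) //= /setv !eqxx.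
set P := \prod_(k < d | k != m) _; set P0 := \prod_(k < d | k != m) _.
set P1 := \prod_(k < d | k != m) _.
have -> : P0 = P by apply: eq_bigr => k /negbTE ->.
have -> : P1 = P by apply: eq_bigr => k /negbTE ->.
by rewrite /basis2; case: (ord2P (j m)) => ->; rewrite ?eqxx /= mulr0n; ring.
Qed.

Lemma setvC z p q u v : p != q -> forall k c,
  setv (setv z p u) q v k c = setv (setv z q v) p u k c.
Proof.
move=> neq_pq k c; rewrite /setv.
by case: (eqVneq k q) => [->|//]; rewrite eq_sym (negbTE neq_pq).
Qed.

Definition tslice z p q (i j : 'I_2) : R := tcontract (setv (setv z p (basis2 i)) q (basis2 j)).

Lemma tcontract_setv2 z p q u v : p != q -> tcontract (setv (setv z p u) q v) =
  u ord0 * v ord0 * tslice z p q ord0 ord0 + u ord0 * v ord_max * tslice z p q ord0 ord_max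
  + u ord_max * v ord0 * tslice z p q ord_max ord0
  + u ord_max * v ord_max * tslice z p q ord_max ord_max.
Proof.
move=> neq_pq.
have E j : tcontract (setv (setv z p u) q (basis2 j)) =
    u ord0 * tslice z p q ord0 j + u ord_max * tslice z p q ord_max j.
  rewrite (tcontract_ext (setvC z u (basis2 j) neq_pq)) tcontract_setv /tslice.
  by congr (_ * _ + _ * _); apply: tcontract_ext; apply: setvC; rewrite eq_sym.
by rewrite tcontract_setv !E; ring.
Qed.

Lemma tslice_setv z p q m y i j : p != q -> m != p -> m != q ->
  tslice (setv z m y) p q i j =
  y ord0 * tslice (setv z m (basis2 ord0)) p q i j
  + y ord_max * tslice (setv z m (basis2 ord_max)) p q i j.
Proof.
move=> neq_pq neq_mp neq_mq.
have E w k c : setv (setv (setv z m w) p (basis2 i)) q (basis2 j) k c =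
               setv (setv (setv z p (basis2 i)) q (basis2 j)) m w k c.
  by rewrite /setv; case: (eqVneq k m) => [->|//]; rewrite (negbTE neq_mp) (negbTE neq_mq).
by rewrite /tslice (tcontract_ext (E y)) tcontract_setv -!(tcontract_ext (E _)).
Qed.

Hypothesis T_sym : sym_tensor T.

Lemma tcontract_perm ys (s : 'S_d) : tcontract (fun k => ys (s k)) = tcontract ys.
Proof.
rewrite /tcontract.
pose h (j : mindex d) : mindex d := [ffun k => j ((s^-1)%g k)].
have h_inj : injective h.
  move=> j1 j2 /(congr1 (fun g : mindex d => g (s _))) => E; apply/ffunP => k.
  by have := E k; rewrite !ffunE permK.
rewrite [RHS](reindex_inj h_inj); apply: eq_bigr => j _.
have -> : T (h j) = T j.
  by rewrite -(T_sym s (h j)); congr (T _); apply/ffunP => k; rewrite !ffunE permK.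
congr (_ * _); rewrite [RHS](reindex_inj (@perm_inj _ s)); apply: eq_bigr => k _.
by rewrite ffunE permK.
Qed.

Lemma tslice_sym z p q i j : p != q -> tslice z p q i j = tslice z p q j i.
Proof.
move=> neq_pq; have neq_qp : q != p by rewrite eq_sym.
rewrite /tslice -[RHS](tcontract_perm _ (tperm p q)); apply: tcontract_ext => k c.
by rewrite /setv; case: tpermP => [->|->|/eqP/negbTE -> /eqP/negbTE ->];
  rewrite ?eqxx ?(negbTE neq_pq) ?(negbTE neq_qp).
Qed.

Lemma tslice_setv_swap z p q m y i j : p != q -> m != p -> m != q ->
  tslice (setv z q y) p m i j = tslice (setv z m y) p q i j.
Proof.
move=> neq_pq neq_mp neq_mq; have neq_qp : q != p by rewrite eq_sym.
have neq_pm : p != m by rewrite eq_sym.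
have neq_qm : q != m by rewrite eq_sym.
rewrite /tslice -[RHS](tcontract_perm _ (tperm q m)); apply: tcontract_ext => k c.
by rewrite /setv; case: tpermP => [->|->|/eqP/negbTE -> /eqP/negbTE ->];
  rewrite ?eqxx ?(negbTE neq_pq) ?(negbTE neq_qp) ?(negbTE neq_mp) ?(negbTE neq_pm)
    ?(negbTE neq_mq) ?(negbTE neq_qm).
Qed.

End Contraction.

Section UnitVectors.
Variable R : realType.
Implicit Types (u v : 'I_2 -> R).

Definition vec2 (x y : R) : 'I_2 -> R := fun c => if c == ord0 then x else y.

Lemma vec2_ord0 x y : vec2 x y ord0 = x. Proof. by []. Qed.

Lemma vec2_ord_max x y : vec2 x y ord_max = y. Proof. by []. Qed.

Definition det2 u v : R := u ord0 * v ord_max - u ord_max * v ord0.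

Lemma on_S1E v : on_S1 v = (v ord0 ^+ 2 + v ord_max ^+ 2 = 1).
Proof.
rewrite /on_S1 !big_ord_recl big_ord0 addr0.
by have -> : lift ord0 (ord0 : 'I_1) = ord_max :> 'I_2 by apply/val_inj.
Qed.

Lemma on_S1_setv d (ys : 'I_d -> 'I_2 -> R) m v :
  (forall k, on_S1 (ys k)) -> on_S1 v -> forall k, on_S1 (setv ys m v k).
Proof. by move=> ys_unit v_unit k; rewrite /setv; case: (k == m). Qed.

Lemma on_S1_basis2 c : on_S1 (basis2 R c).
Proof. by rewrite on_S1E /basis2; case: (ord2P c) => ->; rewrite !eqxx /=; lra. Qed.

Lemma det2_collinear u v c : on_S1 u -> det2 u v = 0 ->
  v c = (u ord0 * v ord0 + u ord_max * v ord_max) * u c.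
Proof.
rewrite on_S1E /det2 => u_unit uv_dep; apply/eqP; rewrite -subr_eq0; apply/eqP.
case: (ord2P c) => ->.
- have -> : v ord0 - (u ord0 * v ord0 + u ord_max * v ord_max) * u ord0 =
    v ord0 * (1 - (u ord0 ^+ 2 + u ord_max ^+ 2))
    - u ord_max * (u ord0 * v ord_max - u ord_max * v ord0) by ring.
  by rewrite u_unit uv_dep subrr; ring.
- have -> : v ord_max - (u ord0 * v ord0 + u ord_max * v ord_max) * u ord_max =
    v ord_max * (1 - (u ord0 ^+ 2 + u ord_max ^+ 2))
    + u ord0 * (u ord0 * v ord_max - u ord_max * v ord0) by ring.
  by rewrite u_unit uv_dep subrr; ring.
Qed.

End UnitVectors.

Section ScaledReflection.
Variables (R : realType) (d : nat) (T : tensor R d) (sg : R).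
Hypotheses (T_sym : sym_tensor T) (sg_gt0 : 0 < sg).
Hypothesis tcontract_le : forall ys, (forall k, on_S1 (ys k)) -> tcontract T ys <= sg.
Implicit Types (z : 'I_d -> 'I_2 -> R) (u v y : 'I_2 -> R) (m p q : 'I_d).

Definition scaled_reflection p q z : Prop :=
  tslice T z p q ord0 ord0 + tslice T z p q ord_max ord_max = 0 /\
  tslice T z p q ord0 ord0 ^+ 2 + tslice T z p q ord0 ord_max ^+ 2 = sg ^+ 2.

Lemma scaled_reflection_ext p q z z' :
  (forall k, k != p -> k != q -> forall c, z k c = z' k c) ->
  scaled_reflection p q z -> scaled_reflection p q z'.
Proof.
move=> E; have sliceE i j : tslice T z p q i j = tslice T z' p q i j.
  apply: tcontract_ext => k c; rewrite /setv.
  by case: (eqVneq k q) => // ?; case: (eqVneq k p) => // ?; apply: E.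
by rewrite /scaled_reflection !sliceE.
Qed.

Lemma scaled_reflection_of_max p q z u v : p != q -> (forall k, on_S1 (z k)) ->
  on_S1 u -> on_S1 v -> tcontract T (setv (setv z p u) q v) = sg -> det2 u v != 0 ->
  scaled_reflection p q z.
Proof.
move=> neq_pq z_unit u_unit v_unit uv_max uv_indep.
move: (u_unit) (v_unit); rewrite !on_S1E => u_unit' v_unit'.
apply: (sym_bilinear_max_indep sg_gt0 u_unit' v_unit') => //.
- move=> px py qx qy p_unit q_unit.
  have := tcontract_le (ys := setv (setv z p (vec2 px py)) q (vec2 qx qy)).
  rewrite tcontract_setv2 // (tslice_sym T_sym z ord_max ord0 neq_pq); apply.
  by apply: on_S1_setv; [apply: on_S1_setv|]; rewrite // on_S1E.
- by rewrite -uv_max tcontract_setv2 // (tslice_sym T_sym z ord_max ord0 neq_pq).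
Qed.

Definition tslice_mul z p q y : 'I_2 -> R :=
  vec2 (tslice T z p q ord0 ord0 * y ord0 + tslice T z p q ord0 ord_max * y ord_max)
       (tslice T z p q ord_max ord0 * y ord0 + tslice T z p q ord_max ord_max * y ord_max).

(* With M the slice of z at (p, q), the unit vector u = M y / sg in slot p and y in slot q
   reach the maximum sg; if u is independent of z m, the slice at (p, m) is a scaled
   reflection, and symmetry of T exchanges the roles of q and m. *)
Lemma scaled_reflection_setv_generic p q m z y : p != q -> m != p -> m != q ->
  (forall k, on_S1 (z k)) -> scaled_reflection p q z -> on_S1 y ->
  det2 (tslice_mul z p q y) (z m) != 0 -> scaled_reflection p q (setv z m y).
Proof.
move=> neq_pq neq_mp neq_mq z_unit [trace0 norm_sg] y_unit generic.
have neq_pm : p != m by rewrite eq_sym.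
have sg_neq0 : sg != 0 by rewrite gt_eqF.
have b10E : tslice T z p q ord_max ord0 = tslice T z p q ord0 ord_max by rewrite tslice_sym.
set a := tslice T z p q ord0 ord0 in trace0 norm_sg.
set b := tslice T z p q ord0 ord_max in norm_sg b10E.
have cE : tslice T z p q ord_max ord_max = - a by lra.
set u := fun i => tslice_mul z p q y i / sg.
have u0E : u ord0 = (a * y ord0 + b * y ord_max) / sg by [].
have u1E : u ord_max = (b * y ord0 - a * y ord_max) / sg.
  by rewrite /u /tslice_mul /vec2 /= b10E cE mulNr.
move: (y_unit); rewrite on_S1E => y_unit'.
have u_unit : on_S1 u.
  rewrite on_S1E u0E u1E.
  have -> : ((a * y ord0 + b * y ord_max) / sg) ^+ 2 + ((b * y ord0 - a * y ord_max) / sg) ^+ 2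
      = (a ^+ 2 + b ^+ 2) * (y ord0 ^+ 2 + y ord_max ^+ 2) / sg ^+ 2 by field.
  by rewrite y_unit' norm_sg mulr1 divff // expf_neq0.
have u_max : tcontract T (setv (setv (setv z q y) p u) m (z m)) = sg.
  have -> : tcontract T (setv (setv (setv z q y) p u) m (z m)) =
            tcontract T (setv (setv z p u) q y).
    apply: tcontract_ext => k c; rewrite /setv.
    case: (eqVneq k m) => [->|_]; first by rewrite (negbTE neq_mq) (negbTE neq_mp).
    by case: (eqVneq k p) => [->|//]; rewrite (negbTE neq_pq).
  rewrite tcontract_setv2 // b10E cE -/a -/b u0E u1E.
  have -> : (a * y ord0 + b * y ord_max) / sg * y ord0 * a +
      (a * y ord0 + b * y ord_max) / sg * y ord_max * b +
      (b * y ord0 - a * y ord_max) / sg * y ord0 * b +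
      (b * y ord0 - a * y ord_max) / sg * y ord_max * - a =
      (a ^+ 2 + b ^+ 2) * (y ord0 ^+ 2 + y ord_max ^+ 2) / sg by field.
  by rewrite y_unit' norm_sg mulr1 expr2 mulfK.
have uz_indep : det2 u (z m) != 0.
  have -> : det2 u (z m) = det2 (tslice_mul z p q y) (z m) / sg.
    by rewrite /det2 /u; field.
  by rewrite mulf_neq0 // invr_eq0.
have := scaled_reflection_of_max neq_pm (on_S1_setv q z_unit y_unit) u_unit (z_unit m)
  u_max uz_indep.
by rewrite /scaled_reflection !(tslice_setv_swap T_sym z y _ _ neq_pq neq_mp neq_mq).
Qed.

Lemma scaled_reflection_setv p q m z y : p != q -> m != p -> m != q ->
  (forall k, on_S1 (z k)) -> scaled_reflection p q z -> on_S1 y ->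
  scaled_reflection p q (setv z m y).
Proof.
move=> neq_pq neq_mp neq_mq z_unit refl_z y_unit.
have [trace0 norm_sg] := refl_z.
have b10E : tslice T z p q ord_max ord0 = tslice T z p q ord0 ord_max by rewrite tslice_sym.
set a := tslice T z p q ord0 ord0 in trace0 norm_sg.
set b := tslice T z p q ord0 ord_max in norm_sg b10E.
have cE : tslice T z p q ord_max ord_max = - a by lra.
set M0 := tslice T (setv z m (basis2 R ord0)) p q.
set M1 := tslice T (setv z m (basis2 R ord_max)) p q.
have zm_unit := z_unit m; rewrite on_S1E in zm_unit.
have g_neq0 : (a * z m ord_max - b * z m ord0) ^+ 2 + (b * z m ord_max + a * z m ord0) ^+ 2 != 0.
  have -> : (a * z m ord_max - b * z m ord0) ^+ 2 + (b * z m ord_max + a * z m ord0) ^+ 2 =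
      (a ^+ 2 + b ^+ 2) * (z m ord0 ^+ 2 + z m ord_max ^+ 2) by ring.
  by rewrite zm_unit norm_sg mulr1 expf_neq0 // gt_eqF.
have sliceE w i j : tslice T (setv z m w) p q i j = w ord0 * M0 i j + w ord_max * M1 i j.
  exact: tslice_setv.
move: (y_unit); rewrite on_S1E => y_unit'.
move: (circle_identity_off_line (l0 := M0 ord0 ord0 + M0 ord_max ord_max)
  (l1 := M1 ord0 ord0 + M1 ord_max ord_max) (m0 := M0 ord0 ord0) (m1 := M1 ord0 ord0)
  (n0 := M0 ord0 ord_max) (n1 := M1 ord0 ord_max) (s := sg) g_neq0)
  => /(_ _ (y ord0) (y ord_max) y_unit') [y0 y1 y01_unit generic|trace0' norm_sg'].
  have := scaled_reflection_setv_generic neq_pq neq_mp neq_mq z_unit refl_z (y := vec2 y0 y1).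
  rewrite /scaled_reflection !sliceE !vec2_ord0 !vec2_ord_max on_S1E.
  case=> // [|trace0' norm_sg'].
    rewrite /det2 /tslice_mul /vec2 /= b10E cE -/a -/b.
    by apply: contra_neq generic => <-; ring.
  by split; [rewrite -[RHS]trace0'|rewrite -norm_sg']; ring.
by rewrite /scaled_reflection !sliceE; split; [rewrite -[RHS]trace0'|rewrite -norm_sg']; ring.
Qed.

Lemma scaled_reflection_all p q z t : p != q ->
  (forall k, on_S1 (z k)) -> (forall k, on_S1 (t k)) ->
  scaled_reflection p q z -> scaled_reflection p q t.
Proof.
move=> neq_pq z_unit t_unit refl_z.
pose w n (k : 'I_d) := if (k < n)%N then t k else z k.
have w_unit n k : on_S1 (w n k) by rewrite /w; case: ifP.
have refl_w n : scaled_reflection p q (w n).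
  elim: n => [|n IHn].
    by apply: scaled_reflection_ext refl_z => k _ _ c; rewrite /w ltn0.
  have [lt_nd|le_dn] := ltnP n d; last first.
    apply: scaled_reflection_ext IHn => k _ _ c.
    by rewrite /w !(leq_trans (ltn_ord k)) // ltnW.
  set m := Ordinal lt_nd.
  have wSE k c : setv (w n) m (t m) k c = w n.+1 k c.
    rewrite /setv /w; case: (eqVneq k m) => [->|neq_km]; first by rewrite /= ltnSn.
    have /negbTE k_neq_n : (k : nat) != n by apply: contra_neq neq_km => ?; apply: val_inj.
    by rewrite ltnS [(k <= n)%N]leq_eqVlt k_neq_n.
  have [eq_mp|neq_mp] := eqVneq m p.
    apply: scaled_reflection_ext IHn => k; rewrite -eq_mp => /negbTE neq_km _ c.
    by rewrite -wSE /setv neq_km.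
  have [eq_mq|neq_mq] := eqVneq m q.
    apply: scaled_reflection_ext IHn => k _; rewrite -eq_mq => /negbTE neq_km c.
    by rewrite -wSE /setv neq_km.
  have := scaled_reflection_setv neq_pq neq_mp neq_mq (w_unit n) IHn (t_unit m).
  by apply: scaled_reflection_ext => k _ _ c; rewrite wSE.
by apply: scaled_reflection_ext (refl_w d) => k _ _ c; rewrite /w ltn_ord.
Qed.

End ScaledReflection.

Lemma tcontract_basis2 (R : realType) d (T : tensor R d) (i : mindex d) :
  tcontract T (fun k => basis2 R (i k)) = T i.
Proof.
rewrite /tcontract (bigD1 i) //= [X in _ + X]big1 => [|j neq_ji]; last first.
  have [k neq_jik] : exists k, j k != i k.
    apply/existsP; apply: contraR neq_ji; rewrite negb_exists => /forallP eq_ji.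
    by apply/eqP/ffunP => k; apply/eqP; move: (eq_ji k); rewrite negbK.
  by rewrite (bigD1 k) //= /basis2 (negbTE neq_jik) !mul0r mulr0.
by rewrite big1 ?addr0 ?mulr1 // => k _; rewrite /basis2 eqxx.
Qed.

Lemma tcontract_setvZ (R : realType) d (T : tensor R d) ys m r (v : 'I_2 -> R) :
  tcontract T (setv ys m (fun c => r * v c)) = r * tcontract T (setv ys m v).
Proof. by rewrite tcontract_setv [in RHS]tcontract_setv; ring. Qed.

Lemma sum_sqr_sub_rank1 (R : realType) d (T : tensor R d) s ys :
  (forall k, on_S1 (ys k)) ->
  \sum_(j : mindex d) tsub T (rank1 s ys) j ^+ 2 =
  \sum_(j : mindex d) T j ^+ 2 - 2 * s * tcontract T ys + s ^+ 2.
Proof.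
move=> ys_unit.
have rank1_norm : \sum_(j : mindex d) (\prod_(k < d) ys k (j k)) ^+ 2 = 1.
  under eq_bigr => j _ do rewrite -prodrXl.
  by rewrite -(bigA_distr_bigA (fun k c => ys k c ^+ 2)) big1 // => k _; apply: ys_unit.
rewrite /tsub /rank1 /tcontract.
rewrite (eq_bigr (fun j => T j ^+ 2 - 2 * s * (T j * \prod_(k < d) ys k (j k))
  + s ^+ 2 * (\prod_(k < d) ys k (j k)) ^+ 2)); last by move=> j _; ring.
by rewrite big_split sumrB -!mulr_sumr rank1_norm mulr1.
Qed.

Lemma best_rank1_tcontract (R : realType) d (T : tensor R d) a xs :
  best_rank1 T a xs ->
  a = tcontract T xs /\ forall ys, (forall k, on_S1 (ys k)) -> tcontract T ys <= `|a|.
Proof.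
move=> [xs_unit best].
have le_dist s ys : (forall k, on_S1 (ys k)) ->
    - 2 * a * tcontract T xs + a ^+ 2 <= - 2 * s * tcontract T ys + s ^+ 2.
  move=> ys_unit; have := best s ys ys_unit.
  rewrite /tnorm ler_sqrt; last by apply: sumr_ge0 => j _; apply: sqr_ge0.
  rewrite !sum_sqr_sub_rank1 //; lra.
have aE : a = tcontract T xs.
  have := le_dist (tcontract T xs) _ xs_unit => le_a.
  by apply/eqP; rewrite -subr_eq0 -sqrf_eq0 eq_le sqr_ge0 andbT; nra.
split=> // ys ys_unit; have := le_dist (tcontract T ys) _ ys_unit; rewrite -aE.
have := normr_ge0 a; have := real_normK (num_real a); nra.
Qed.

Lemma rank1_sym_of_collinear (R : realType) d (a : R) (xs : 'I_d -> 'I_2 -> R) p :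
  on_S1 (xs p) -> (forall l, det2 (xs p) (xs l) = 0) -> sym_tensor (rank1 a xs).
Proof.
move=> xp_unit collinear s i.
pose kap l := xs p ord0 * xs l ord0 + xs p ord_max * xs l ord_max.
have prodE (j : mindex d) :
    \prod_(k < d) xs k (j k) = (\prod_(k < d) kap k) * \prod_(k < d) xs p (j k).
  by rewrite -big_split; apply: eq_bigr => k _; apply: det2_collinear.
rewrite /rank1 !prodE; congr (_ * (_ * _)).
by rewrite [RHS](reindex_inj (@perm_inj _ s)); apply: eq_bigr => k _; rewrite ffunE.
Qed.

Lemma tslice_basis2 (R : realType) d (T : tensor R d) (idx : mindex d) p q i j :
  val p = 0%N -> val q = 1%N ->
  tslice T (fun k => basis2 R (idx k)) p q i j = T (idx2 idx i j).
Proof.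
move=> p0 q1; rewrite -tcontract_basis2; apply: tcontract_ext => k c.
rewrite /setv /idx2 ffunE.
have [->|neq_kq] := eqVneq k q; first by rewrite q1.
have [->|neq_kp] := eqVneq k p; first by rewrite p0.
have /negbTE -> : val k != 0%N by apply: contra_neq neq_kp => k0; apply: val_inj; rewrite k0 p0.
by have /negbTE -> : val k != 1%N by apply: contra_neq neq_kq => k1; apply: val_inj; rewrite k1 q1.
Qed.

Lemma scaled_reflection_start (R : realType) d (T : tensor R d) (xs : 'I_d -> 'I_2 -> R) p q l :
  sym_tensor T -> (forall k, on_S1 (xs k)) -> tcontract T xs != 0 ->
  (forall ys, (forall k, on_S1 (ys k)) -> tcontract T ys <= `|tcontract T xs|) ->
  p != q -> det2 (xs p) (xs l) != 0 ->
  scaled_reflection T `|tcontract T xs| p q (fun k => xs (tperm q l k)).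
Proof.
move=> T_sym xs_unit a_neq0 le_a neq_pq indep.
set a := tcontract T xs in a_neq0 le_a *.
have neq_pl : p != l by apply: contra_neq indep => <-; rewrite /det2 mulrC subrr.
have xs'_p : xs (tperm q l p) = xs p by rewrite tpermD // eq_sym.
have sg_neq0 : Num.sg a != 0 by rewrite sgr_eq0.
apply: (scaled_reflection_of_max (u := fun c => Num.sg a * xs p c) T_sym _ le_a neq_pq _ _
  (xs_unit l)); first by rewrite normr_gt0.
- by move=> k; apply: xs_unit.
- move: (xs_unit p); rewrite !on_S1E => xp_unit.
  by rewrite !exprMn -mulrDr xp_unit sqr_sg a_neq0 mulr1.
- rewrite (tcontract_ext T (setvC _ _ _ neq_pq)) tcontract_setvZ normrEsg; congr (_ * _).
  rewrite /a -(tcontract_perm T_sym xs (tperm q l)); apply: tcontract_ext => k c.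
  rewrite /setv; case: (eqVneq k p) => [->|_]; first by rewrite xs'_p.
  by case: (eqVneq k q) => [->|//]; rewrite tpermL.
- by rewrite /det2 -!mulrA -mulrBr mulf_neq0.
Qed.

Theorem lemma5p1 (R : realType) (d : nat) (T : tensor R d) :
  (2 <= d)%N ->
  sym_tensor T ->
  (exists i : mindex d, T i != 0) ->
  (exists (a : R) (xs : 'I_d -> 'I_2 -> R),
      best_rank1 T a xs /\ ~ sym_tensor (rank1 a xs)) ->
  forall idx : mindex d,
    T (idx2 idx ord0 ord0) + T (idx2 idx ord_max ord_max) = 0.
Proof.
move=> le2d T_sym _ [a [xs [best not_sym]]] idx.
have [aE le_a] := best_rank1_tcontract best.
have xs_unit := best.1.
have a_neq0 : a != 0.
  by apply: contra_notN not_sym => /eqP a0 s i; rewrite /rank1 a0 !mul0r.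
pose p : 'I_d := Ordinal (ltnW le2d); pose q : 'I_d := Ordinal le2d.
have [l indep] : exists l, det2 (xs p) (xs l) != 0.
  apply/existsP; apply: contra_notT not_sym; rewrite negb_exists => /forallP collinear.
  by apply: (rank1_sym_of_collinear _ (xs_unit p)) => l; apply/eqP/negPn/collinear.
have := scaled_reflection_start T_sym xs_unit _ _ (isT : p != q) indep.
rewrite -aE => /(_ a_neq0 le_a) refl0.
have a_gt0 : 0 < `|a| by rewrite normr_gt0.
have [trace0 _] := scaled_reflection_all T_sym a_gt0 le_a (isT : p != q) (fun k => xs_unit _)
  (fun k => on_S1_basis2 R (idx k)) refl0.
by rewrite -!(tslice_basis2 T idx _ _ (erefl : val p = 0%N) (erefl : val q = 1%N)).
Qed.
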